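(* Let $R\colon\mathbb R^d\to\mathbb R$, $R(\mathbf x)=\sum_{i=1}^p\psi_i(\mathbf w_i^T\mathbf x)$ with $\mathbf w_i\in\mathbb R^d$ and convex $\psi_i\in C^{1,1}(\mathbb R)$, let $L=\mathrm{Lip}(\nabla R)$, $\lambda\ge0$, and $t\ge1$ an integer. For $\mathbf y\in\mathbb R^d$ define $\mathbf x_0=\mathbf y$ and $\mathbf x_{k+1}=\mathbf x_k-\alpha\bigl((\mathbf x_k-\mathbf y)+\lambda\nabla R(\mathbf x_k)\bigr)$, and let the $t$-step denoiser be the map $\mathbf y\mapsto\mathbf x_t$. If $\alpha\in[0,2/(2+\lambda L)]$, then the $t$-step denoiser is averaged.
   Context: A map $\mathbf D\colon\mathbb R^d\to\mathbb R^d$ is averaged if $\mathbf D=\beta\mathbf N+(1-\beta)\mathbf{Id}$ for some $\beta\in(0,1)$ and some nonexpansive (1-Lipschitz) map $\mathbf N\colon\mathbb R^d\to\mathbb R^d$. $C^{1,1}(\mathbb R)$ is the set of differentiable functions with Lipschitz-continuous derivative. *)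

From HB Require Import structures.
From mathcomp Require Import all_boot all_order all_algebra.
From mathcomp Require Import all_classical all_reals all_analysis.
Set Implicit Arguments. Unset Strict Implicit. Unset Printing Implicit Defensive.
Import Order.TTheory GRing.Theory Num.Theory.
Import numFieldNormedType.Exports.
Local Open Scope ring_scope.

Section Defs.
Variables (R : realType) (d : nat).

Definition dotp (u v : 'rV[R]_d) : R := \sum_(j < d) u ord0 j * v ord0 j.
Definition enorm (u : 'rV[R]_d) : R := Num.sqrt (dotp u u).

Definition nonexpansive (N : 'rV[R]_d -> 'rV[R]_d) : Prop :=
  forall x y, enorm (N x - N y) <= enorm (x - y).

Definition averaged (D : 'rV[R]_d -> 'rV[R]_d) : Prop :=
  exists beta : R, 0 < beta < 1 /\
    exists N : 'rV[R]_d -> 'rV[R]_d, nonexpansive N /\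
      forall x, D x = beta *: N x + (1 - beta) *: x.

Definition lipschitz_vec (L : R) (G : 'rV[R]_d -> 'rV[R]_d) : Prop :=
  0 <= L /\ forall x y, enorm (G x - G y) <= L * enorm (x - y).

Definition ridge (p : nat) (w : 'I_p -> 'rV[R]_d) (psi : 'I_p -> R -> R)
  (x : 'rV[R]_d) : R := \sum_(i < p) psi i (dotp (w i) x).

(* its gradient (chain rule), given dpsi i = psi_i' *)
Definition ridge_grad (p : nat) (w : 'I_p -> 'rV[R]_d) (dpsi : 'I_p -> R -> R)
  (x : 'rV[R]_d) : 'rV[R]_d := \sum_(i < p) dpsi i (dotp (w i) x) *: w i.

(* one gradient step on  x |-> 1/2 |x - y|^2 + lambda R(x) *)
Definition denoise_step (G : 'rV[R]_d -> 'rV[R]_d) (alpha lambda : R)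
  (y x : 'rV[R]_d) : 'rV[R]_d := x - alpha *: ((x - y) + lambda *: G x).

Definition t_step_denoiser (G : 'rV[R]_d -> 'rV[R]_d) (alpha lambda : R)
  (t : nat) (y : 'rV[R]_d) : 'rV[R]_d := iter t (denoise_step G alpha lambda y) y.

End Defs.

Definition convex_fun (R : realType) (f : R -> R) : Prop :=
  forall x y (s : R), 0 <= s <= 1 -> f (s * x + (1 - s) * y) <= s * f x + (1 - s) * f y.

Definition lipschitz_real (R : realType) (L : R) (g : R -> R) : Prop :=
  forall a b : R, `|g a - g b| <= L * `|a - b|.

(* Since ridge_grad is the gradient of the convex function ridge and is
   L-Lipschitz, the descent lemma and the Baillon-Haddad argument make it
   (1/L)-cocoercive, i.e. ridge_grad - (L/2) Id is (L/2)-Lipschitz.  With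
   c = 1/(2 + lambda L), one denoising step rewrites x_{k+1} - c y as
   q (x_k - c y) + (alpha/2) y - alpha lambda (ridge_grad - (L/2) Id) x_k where
   q = 1 - alpha (2 + lambda L)/2 >= 0, so by induction on t
   |(x_t - x'_t) - c (y - y')| <= (1 - c) |y - y'|.  This says precisely that
   the t-step denoiser is (1 - c) N + c Id with N nonexpansive. *)

From HB Require Import structures.
From mathcomp Require Import all_boot all_order all_algebra.
From mathcomp Require Import all_classical all_reals all_analysis.
From mathcomp Require Import ring lra.
Set Implicit Arguments.
Unset Strict Implicit.
Unset Printing Implicit Defensive.

Import Order.TTheory GRing.Theory Num.Theory.
Import numFieldNormedType.Exports.
Local Open Scope ring_scope.

Section Euclidean.
Variables (R : realType) (d : nat).
Implicit Types (a : R) (g u v z : 'rV[R]_d).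

Lemma dotpC u v : dotp u v = dotp v u.
Proof. by apply: eq_bigr => j _; rewrite mulrC. Qed.

Lemma dotpDl u v z : dotp (u + v) z = dotp u z + dotp v z.
Proof. by rewrite /dotp -big_split; apply: eq_bigr => j _; rewrite mxE mulrDl. Qed.

Lemma dotpZl a u v : dotp (a *: u) v = a * dotp u v.
Proof. by rewrite /dotp mulr_sumr; apply: eq_bigr => j _; rewrite mxE mulrA. Qed.

Lemma dotpNl u v : dotp (- u) v = - dotp u v.
Proof. by rewrite -scaleN1r dotpZl mulN1r. Qed.

Lemma dotpBl u v z : dotp (u - v) z = dotp u z - dotp v z.
Proof. by rewrite dotpDl dotpNl. Qed.

Lemma dotpDr u v z : dotp z (u + v) = dotp z u + dotp z v.
Proof. by rewrite !(dotpC z) dotpDl. Qed.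

Lemma dotpZr a u v : dotp v (a *: u) = a * dotp v u.
Proof. by rewrite !(dotpC v) dotpZl. Qed.

Lemma dotpNr u v : dotp v (- u) = - dotp v u.
Proof. by rewrite !(dotpC v) dotpNl. Qed.

Lemma dotpBr u v z : dotp z (u - v) = dotp z u - dotp z v.
Proof. by rewrite dotpDr dotpNr. Qed.

Lemma dotp0l v : dotp 0 v = 0.
Proof. by rewrite -(scale0r 0) dotpZl mul0r. Qed.

Lemma dotp0r v : dotp v 0 = 0.
Proof. by rewrite dotpC dotp0l. Qed.

Lemma dotp_suml n (f : 'I_n -> 'rV[R]_d) v :
  dotp (\sum_(i < n) f i) v = \sum_(i < n) dotp (f i) v.
Proof.
by apply: (big_morph (fun u => dotp u v)) => [x y|]; rewrite ?dotpDl ?dotp0l.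
Qed.

Lemma dotpp_ge0 u : 0 <= dotp u u.
Proof. by apply: sumr_ge0 => j _; rewrite -expr2 sqr_ge0. Qed.

Lemma dotpp_eq0 u : (dotp u u == 0) = (u == 0).
Proof.
apply/idP/eqP => [|->]; last by rewrite dotp0l.
rewrite psumr_eq0 => [/allP u0|j _]; last by rewrite -expr2 sqr_ge0.
apply/rowP => j; have /implyP := u0 j (mem_index_enum j).
by rewrite -expr2 sqrf_eq0 mxE => /(_ isT)/eqP.
Qed.

Lemma enorm_ge0 u : 0 <= enorm u.
Proof. exact: sqrtr_ge0. Qed.

Lemma enorm_sqr u : enorm u ^+ 2 = dotp u u.
Proof. by rewrite sqr_sqrtr // dotpp_ge0. Qed.

Lemma enorm_eq0 u : (enorm u == 0) = (u == 0).
Proof. by rewrite -sqrf_eq0 enorm_sqr dotpp_eq0. Qed.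

Lemma enormZ a u : enorm (a *: u) = `|a| * enorm u.
Proof. by rewrite /enorm dotpZl dotpZr mulrA -expr2 sqrtrM ?sqr_ge0 // sqrtr_sqr. Qed.

Lemma enormN u : enorm (- u) = enorm u.
Proof. by rewrite -scaleN1r enormZ normrN normr1 mul1r. Qed.

Lemma cauchy_schwarz u v : dotp u v <= enorm u * enorm v.
Proof.
have [->|u0] := eqVneq u 0; first by rewrite dotp0l /enorm dotp0l sqrtr0 mul0r.
have [->|v0] := eqVneq v 0; first by rewrite dotp0r /enorm dotp0r sqrtr0 mulr0.
have uv_gt0 : 0 < enorm u * enorm v by rewrite mulr_gt0 // lt_def enorm_eq0 ?u0 ?v0 enorm_ge0.
have := dotpp_ge0 (enorm v *: u - enorm u *: v).
rewrite !(dotpBl, dotpBr, dotpZl, dotpZr) -!enorm_sqr (dotpC v u) => sq_ge0.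
by rewrite -(ler_pM2l uv_gt0); nra.
Qed.

Lemma enormD u v : enorm (u + v) <= enorm u + enorm v.
Proof.
rewrite -[leRHS]ger0_norm ?addr_ge0 ?enorm_ge0 // -sqrtr_sqr ler_sqrt ?sqr_ge0 //.
rewrite !(dotpDl, dotpDr) sqrrD -!enorm_sqr (dotpC v u).
have := cauchy_schwarz u v; lra.
Qed.

Lemma enorm_subZ_half_le (L : R) g u :
  0 <= L -> dotp g g <= L * dotp g u -> enorm (g - (L / 2) *: u) <= L / 2 * enorm u.
Proof.
move=> L_ge0 g_le.
rewrite -(@ler_pXn2r _ 2) ?nnegrE ?mulr_ge0 ?divr_ge0 ?enorm_ge0 //.
rewrite exprMn !enorm_sqr !(dotpBl, dotpBr, dotpZl, dotpZr) (dotpC u g).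
nra.
Qed.

End Euclidean.

Section RealCalculus.
Variable R : realType.
Implicit Types (f g : R -> R) (a b s x l C K : R).

Lemma is_derive1_comp f g x (df dg : R) :
  is_derive x 1 g dg -> is_derive (g x) 1 f df -> is_derive x 1 (f \o g) (df * dg).
Proof.
move=> [gx gx_dg] [fgx fgx_df].
have fg_x : derivable (f \o g) x 1.
  by apply/derivable1_diffP/differentiable_comp; apply/derivable1_diffP.
apply: DeriveDef => //.
by rewrite -derive1E derive1_comp // !derive1E fgx_df gx_dg.
Qed.

Lemma is_derive_affine a b s : is_derive s 1 (fun s : R => a + s * b) b.
Proof.
have -> : (fun s : R => a + s * b) = cst a + ( *%R^~ b) by [].
by apply: is_derive_eq; rewrite scaler0 !add0r [_%:A]mulr1.
Qed.

Lemma derive_le_slope f x l C :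
  is_derive x 1 f l -> (forall h, 0 < h <= 1 -> f (x + h) - f x <= h * C) -> l <= C.
Proof.
move=> [fx <-] slope.
rewrite ['D_1 f x]cvg_at_rightE //; apply: limr_le.
  rewrite -(cvg_at_rightE (fun h : R => h^-1 *: ((f \o shift x) _ - f x))) //.
  apply: cvg_trans fx; apply: cvg_app.
  move=> A [e e_gt0 Ae]; exists e => // y ye y_gt0; apply: Ae => //.
  exact/lt0r_neq0.
near=> h.
have h_gt0 : 0 < h by near: h; exact: nbhs_right_gt.
have h_le1 : h <= 1 by near: h; exact: nbhs_right_le.
rewrite /= [h *: 1]mulr1 (addrC h x) -[_ *: _]/(h^-1 * _) ler_pdivrMl //.
by apply: slope; rewrite h_gt0.
Unshelve. all: by end_near. Qed.

Lemma convex_fun_tangent_le f (df : R -> R) a b :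
  (forall x, is_derive x 1 f (df x)) -> convex_fun f -> f a + df a * (b - a) <= f b.
Proof.
move=> f_df f_cvx.
pose line s := a + s * (b - a).
have line_df : is_derive (0 : R) 1 (f \o line) (df a * (b - a)).
  have := is_derive1_comp (is_derive_affine a (b - a) 0) (f_df (line 0)).
  by rewrite /line mul0r addr0.
suff : df a * (b - a) <= f b - f a by lra.
apply: derive_le_slope line_df _ => h /andP[h_gt0 h_le1].
have := f_cvx b a h; rewrite ltW // h_le1 => /(_ isT).
rewrite /line /= add0r mul0r addr0 (_ : h * b + (1 - h) * a = a + h * (b - a)); first lra.
ring.
Qed.

Lemma le_taylor1_quadratic f (df : R -> R) K :
  (forall s, is_derive s 1 f (df s)) -> (forall s, 0 <= s -> df s - df 0 <= K * s) ->
  f 1 <= f 0 + df 0 + K / 2.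
Proof.
move=> f_df df_le.
pose g := f - ( *%R^~ (df 0)) - (fun s => K / 2 * (s * s)).
have g_dg s : is_derive s 1 g (df s - df 0 - K * s).
  apply: is_derive_eq.
  by rewrite scaler0 add0r ![_%:A]mulr1 -[(K / 2) *: _]/(K / 2 * (s + s)); lra.
have [c c01 g1] := MVT ltr01 (fun x _ => g_dg x)
  (derivable_within_continuous (fun x _ => @ex_derive _ _ _ _ _ _ _ (g_dg x))).
have c_gt0 : 0 < c by rewrite (itvP c01).
have := df_le c (ltW c_gt0).
move: g1; rewrite /g /= !fctE !mul0r !mul1r !mulr0 subr0 mulr1; lra.
Qed.

End RealCalculus.


Section SmoothConvex.
Variables (R : realType) (d : nat) (F : 'rV[R]_d -> R) (G : 'rV[R]_d -> 'rV[R]_d) (L : R).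
Hypothesis F_line_derive : forall (z v : 'rV[R]_d) (s : R),
  is_derive s 1 (fun s => F (z + s *: v)) (dotp (G (z + s *: v)) v).
Hypothesis G_lipschitz : lipschitz_vec L G.

Lemma descent_le z v : F (z + v) <= F z + dotp (G z) v + L / 2 * dotp v v.
Proof.
have := le_taylor1_quadratic (F_line_derive z v) (K := L * dotp v v).
rewrite scale1r scale0r addr0 mulrAC; apply => s s_ge0.
rewrite -dotpBl; apply: le_trans (cauchy_schwarz _ _) _.
have := G_lipschitz.2 (z + s *: v) z; rewrite addrAC subrr add0r enormZ ger0_norm //.
rewrite -enorm_sqr (_ : L * _ * s = L * (s * enorm v) * enorm v); last by ring.
by move/(ler_wpM2r (enorm_ge0 v)).
Qed.

Hypothesis F_tangent_le : forall x z, F x + dotp (G x) (z - x) <= F z.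

Lemma tangent_gap_ge x z : 0 < L ->
  dotp (G z - G x) (G z - G x) / (2 * L) <= F z - F x - dotp (G x) (z - x).
Proof.
move=> L_gt0; set g := G z - G x.
(* compare the tangent at x with the descent bound at z in the direction -g/L *)
pose v := - L^-1 *: g.
have lower := F_tangent_le x (z + v); have upper := descent_le z v.
have shift : dotp (G x) (z + v - x) = dotp (G x) (z - x) + dotp (G x) v.
  by rewrite addrAC; apply: dotpDr.
have slope : dotp (G z) v - dotp (G x) v = - (dotp g g / L).
  by rewrite -dotpBl -/g dotpZr; ring.
have curv : L / 2 * dotp v v = dotp g g / (2 * L).
  by rewrite dotpZl dotpZr; field; rewrite gt_eqF.
have halves : dotp g g / (2 * L) + dotp g g / (2 * L) = dotp g g / L.
  by field; rewrite gt_eqF.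
lra.
Qed.

Lemma gradient_cocoercive x z :
  dotp (G z - G x) (G z - G x) <= L * dotp (G z - G x) (z - x).
Proof.
set g := G z - G x.
have [L0|L_neq0] := eqVneq L 0.
  have : enorm g <= 0 by have := G_lipschitz.2 z x; rewrite L0 mul0r.
  rewrite le_eqVlt ltNge enorm_ge0 orbF enorm_eq0 => /eqP->.
  by rewrite dotp0l dotp0l mulr0.
have L_gt0 : 0 < L by rewrite lt_def L_neq0 G_lipschitz.1.
have := tangent_gap_ge x z L_gt0; have := tangent_gap_ge z x L_gt0.
rewrite -/g -[G x - G z]opprB dotpNl dotpNr opprK => gap_zx gap_xz.
have cross : dotp (G x) (z - x) + dotp (G z) (x - z) = - dotp g (z - x).
  by rewrite /g dotpBl -[x - z]opprB !dotpNr (dotpC (G x)) (dotpC (G z)); ring.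
suff : dotp g g / L <= dotp g (z - x) by rewrite ler_pdivrMr // mulrC.
have halves : dotp g g / (2 * L) + dotp g g / (2 * L) = dotp g g / L.
  by field; rewrite gt_eqF.
lra.
Qed.

End SmoothConvex.

Lemma averaged_of_enorm_le (R : realType) (d : nat) (D : 'rV[R]_d -> 'rV[R]_d) (beta : R) :
  0 < beta < 1 ->
  (forall y y', enorm (D y - D y' - (1 - beta) *: (y - y')) <= beta * enorm (y - y')) ->
  averaged D.
Proof.
move=> /andP[beta_gt0 beta_lt1] D_le; exists beta; split; first by rewrite beta_gt0.
exists (fun y => beta^-1 *: (D y - (1 - beta) *: y)); split; last first.
  by move=> y; rewrite scalerA mulfV ?gt_eqF // scale1r subrK.
move=> y y'; rewrite -scalerBr enormZ ger0_norm ?invr_ge0 ?(ltW beta_gt0) //.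
rewrite ler_pdivrMl // (_ : _ - _ - _ = D y - D y' - (1 - beta) *: (y - y')) ?D_le //.
by apply/rowP => j; rewrite !mxE; ring.
Qed.

Section Denoiser.
Variables (R : realType) (d : nat) (G : 'rV[R]_d -> 'rV[R]_d) (L alpha lambda : R).
Hypothesis L_ge0 : 0 <= L.
Hypothesis lambda_ge0 : 0 <= lambda.
Hypothesis alpha_ge0 : 0 <= alpha.
Hypothesis alpha_le : alpha <= 2 / (2 + lambda * L).
Hypothesis G_shift_le : forall x x',
  enorm (G x - G x' - (L / 2) *: (x - x')) <= L / 2 * enorm (x - x').

Local Notation step := (denoise_step G alpha lambda).
(* [1 - c] is the averagedness constant (1 + lambda L) / (2 + lambda L). *)
Let c := (2 + lambda * L)^-1.

Let kappa_gt0 : 0 < 2 + lambda * L.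
Proof. by have := mulr_ge0 lambda_ge0 L_ge0; lra. Qed.

Let c_gt0 : 0 < c.
Proof. by rewrite invr_gt0. Qed.

Let c_lt1 : c < 1.
Proof. by rewrite invf_lt1 //; have := mulr_ge0 lambda_ge0 L_ge0; lra. Qed.

Lemma denoise_step_le y y' x x' :
  enorm (x - x' - c *: (y - y')) <= (1 - c) * enorm (y - y') ->
  enorm (step y x - step y' x' - c *: (y - y')) <= (1 - c) * enorm (y - y').
Proof.
set u := x - x'; set v := y - y'; move=> uv_le.
pose h := G x - G x' - (L / 2) *: u.
pose q := 1 - alpha * (2 + lambda * L) / 2.
have q_ge0 : 0 <= q by move: alpha_le; rewrite ler_pdivlMr // /q; lra.
have u_le : enorm u <= enorm v.
  rewrite -(subrK (c *: v) u); apply: le_trans (enormD _ _) _.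
  by rewrite enormZ ger0_norm ?(ltW c_gt0) //; lra.
have -> : step y x - step y' x' - c *: v =
    q *: (u - c *: v) + (alpha / 2) *: v - (alpha * lambda) *: h.
  apply/rowP => j; rewrite /denoise_step /h /q /c /u /v !mxE.
  by field; rewrite gt_eqF.
have h_le : enorm h <= L / 2 * enorm v.
  by apply: le_trans (G_shift_le x x') _; rewrite ler_wpM2l ?divr_ge0.
have coef : q * (1 - c) + alpha / 2 + alpha * lambda * (L / 2) = 1 - c.
  by rewrite /q /c; field; rewrite gt_eqF.
apply: le_trans (enormD _ _) _; rewrite enormN.
apply: le_trans (lerD (enormD _ _) (lexx _)) _.
rewrite !enormZ !ger0_norm ?mulr_ge0 ?divr_ge0 //.
have := ler_wpM2l q_ge0 uv_le; have := ler_wpM2l (mulr_ge0 alpha_ge0 lambda_ge0) h_le.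
rewrite -[in X in _ -> _ -> X]coef; lra.
Qed.

Lemma t_step_denoiser_le t y y' :
  enorm (t_step_denoiser G alpha lambda t y - t_step_denoiser G alpha lambda t y'
         - c *: (y - y')) <= (1 - c) * enorm (y - y').
Proof.
elim: t => [|t IHt]; last by rewrite /t_step_denoiser !iterS; apply: denoise_step_le.
rewrite /t_step_denoiser /= -{1}(scale1r (y - y')) -scalerBl enormZ ger0_norm //.
by rewrite subr_ge0 ltW.
Qed.

Lemma t_step_denoiser_averaged t : averaged (t_step_denoiser G alpha lambda t).
Proof.
apply: (averaged_of_enorm_le (beta := 1 - c)); first by rewrite subr_gt0 c_lt1 gtrBl c_gt0.
by move=> y y'; rewrite subKr; apply: t_step_denoiser_le.
Qed.

End Denoiser.

Section Ridge.
Variables (R : realType) (d p : nat) (w : 'I_p -> 'rV[R]_d) (psi dpsi : 'I_p -> R -> R).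
Hypothesis psi_dpsi : forall i (s : R), is_derive s 1 (psi i) (dpsi i s).
Local Notation F := (ridge w psi).
Local Notation G := (ridge_grad w dpsi).

Lemma dotp_ridge_grad x v :
  dotp (G x) v = \sum_(i < p) dpsi i (dotp (w i) x) * dotp (w i) v.
Proof. by rewrite dotp_suml; apply: eq_bigr => i _; rewrite dotpZl. Qed.

Lemma ridge_line_derive z v (s : R) :
  is_derive s 1 (fun s => F (z + s *: v)) (dotp (G (z + s *: v)) v).
Proof.
have -> : (fun s => F (z + s *: v)) =
    \sum_(i < p) (psi i \o fun s => dotp (w i) z + s * dotp (w i) v).
  by apply/funext => r; rewrite fct_sumE; apply: eq_bigr => i _; rewrite /= dotpDr dotpZr.
rewrite dotp_ridge_grad; apply: is_derive_sum => i.
rewrite dotpDr dotpZr; apply: is_derive1_comp => //; exact: is_derive_affine.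
Qed.

Hypothesis psi_convex : forall i, convex_fun (psi i).

Lemma ridge_tangent_le x z : F x + dotp (G x) (z - x) <= F z.
Proof.
rewrite dotp_ridge_grad /ridge -big_split /=; apply: ler_sum => i _.
by rewrite dotpBr; apply: convex_fun_tangent_le.
Qed.

End Ridge.

Theorem proposition6 (R : realType) (d p : nat) (w : 'I_p -> 'rV[R]_d)
    (psi dpsi : 'I_p -> R -> R) (L lambda alpha : R) (t : nat) :
  (* psi_i is differentiable with derivative dpsi_i *)
  (forall i (s : R), is_derive s 1 (psi i) (dpsi i s)) ->
  (* psi_i' is Lipschitz, i.e. psi_i in C^{1,1} *)
  (forall i, exists K : R, lipschitz_real K (dpsi i)) ->
  (* psi_i convex *)
  (forall i, convex_fun (psi i)) ->
  (* L = Lip(grad R): the least Lipschitz constant of grad R *)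
  lipschitz_vec L (ridge_grad w dpsi) ->
  (forall L' : R, lipschitz_vec L' (ridge_grad w dpsi) -> L <= L') ->
  0 <= lambda ->
  (1 <= t)%N ->
  0 <= alpha <= 2 / (2 + lambda * L) ->
  averaged (t_step_denoiser (ridge_grad w dpsi) alpha lambda t).
Proof.
move=> psi_dpsi _ psi_convex G_lip _ lambda_ge0 _ /andP[alpha_ge0 alpha_le].
have L_ge0 := G_lip.1.
apply: (t_step_denoiser_averaged L_ge0 lambda_ge0 alpha_ge0 alpha_le) => x x'.
apply: enorm_subZ_half_le L_ge0 _.
apply: (gradient_cocoercive (F := ridge w psi) _ G_lip) => [z v s|y z].
  exact: ridge_line_derive.
exact: ridge_tangent_le.
Qed.
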